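(* Assume (A1)–(A4) and $(RC_+)$. Let $\pi^+:=\mathbf{1}_{R^+}$, $f(x,y):=\log\big((1-\pi^+(x))+\pi^+(x)e^{y-x}\big)$, and let $\nu$ be the invariant probability measure of $\Phi_t$, which is equivalent to $\lambda_2$. Then $\nu(f)=\int_{\mathbb{R}^2}f\,d\nu>0$.
   Context: Setting: $\mu,\sigma:\mathbb{R}\to\mathbb{R}$ measurable, $(\varepsilon_t)_{t\ge1}$ i.i.d., $X_0$ constant, $X_t=X_{t-1}+\mu(X_{t-1})+\sigma(X_{t-1})\varepsilon_t$; $X_{-1}$ arbitrary constant, $\Phi_t=(X_{t-1},X_t)$; $\lambda,\lambda_2$ Lebesgue measure on $\mathbb{R},\mathbb{R}^2$. (A1) $\varepsilon_1$ has a density w.r.t. $\lambda$, bounded and bounded away from $0$ on compacts; (A2) $\mu$ locally bounded, $\sigma$ positive, bounded away from $0$ on compacts, globally bounded; (A3) $\limsup_{|x|\to\infty}|x+\mu(x)|/|x|<1$; (A4) $\mathbb{E}e^{\kappa\varepsilon_1^2}<\infty$ for some $\kappa>0$, $\mathbb{E}\varepsilon_1=0$. $(RC_+)$: $R^+:=\{x:\mu(x)>0\}$ satisfies $\lambda(R^+)>0$. *)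

From HB Require Import structures.
From mathcomp Require Import all_boot all_order all_algebra.
From mathcomp Require Import all_classical all_reals all_analysis.
Set Implicit Arguments. Unset Strict Implicit. Unset Printing Implicit Defensive.
Import Order.TTheory GRing.Theory Num.Theory.
Local Open Scope classical_set_scope.
Local Open Scope ring_scope.

Definition piplus (R : realType) (mu : R -> R) (x : R) : R :=
  if 0 < mu x then 1 else 0.

Definition fplus (R : realType) (mu : R -> R) (z : R * R) : R :=
  ln ((1 - piplus mu z.1) + piplus mu z.1 * expR (z.2 - z.1)).

(* transition kernel of Phi_t = (X_{t-1}, X_t):
   P((x,y), A) = P_eps { e | (y, y + mu y + sigma y * e) \in A } *)
Definition Phi_step (R : realType) (mu sigma : R -> R) (z : R * R) (e : R)
  : R * R := (z.2, z.2 + mu z.2 + sigma z.2 * e).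

Definition Phi_kernel (R : realType) (mu sigma : R -> R)
  (Pe : probability R R) (z : R * R) (A : set (R * R)) : \bar R :=
  Pe (Phi_step mu sigma z @^-1` A).

Definition Phi_invariant (R : realType) (mu sigma : R -> R)
  (Pe : probability R R) (nu : probability (R * R)%type R) : Prop :=
  forall A : set (R * R), measurable A ->
    nu A = (\int[nu]_z Phi_kernel mu sigma Pe z A)%E.

From HB Require Import structures.
From mathcomp Require Import all_boot all_order all_algebra.
From mathcomp Require Import all_classical all_reals all_analysis.
From mathcomp Require Import measurable_realfun.
From mathcomp Require Import lra ring.
Set Implicit Arguments. Unset Strict Implicit. Unset Printing Implicit Defensive.
Import Order.TTheory GRing.Theory Num.Theory.
Local Open Scope classical_set_scope.
Local Open Scope ring_scope.

(* Since [f(x, y) = pi+(x) (y - x)], one step of the chain gives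
   [f(X_{t-1}, X_t) = pi+(X_{t-1}) mu(X_{t-1}) + pi+(X_{t-1}) sigma(X_{t-1}) eps_t].
   Invariance of [nu] turns [nu(f)] into the expectation of this expression
   under [nu (x) P_eps]; the noise term vanishes because [E eps = 0], leaving
   [nu(pi+ mu)] on the second coordinate, which is positive because [pi+ mu > 0]
   on [R x R^+], a set of positive planar measure, hence of positive [nu]-measure.
   Integrability rests on a first-moment bound: (A2)-(A3) give
   [|y + mu y| <= r |y| + K] with [r < 1], and comparing [min(|y|, N)] before
   and after one step under invariance yields
   [(1 - r) nu(|y|; |y| <= N) <= K + sup sigma * E|eps|] for every [N]. *)

Section product_probability.
Context d1 d2 (T1 : measurableType d1) (T2 : measurableType d2) (R : realType)
  (P1 : probability T1 R) (P2 : probability T2 R).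

Lemma integral_prod_fst (h : T1 -> \bar R) :
  measurable_fun setT h -> (forall x, 0 <= h x)%E ->
  (\int[P1 \x P2]_w h w.1 = \int[P1]_x h x)%E.
Proof.
move=> mh h0; rewrite fubini_tonelli1 //=; last exact: measurableT_comp.
apply: eq_integral => x _; rewrite /fubini_F /=.
by rewrite integral_cst //= probability_setT mule1.
Qed.

Lemma integral_prod_snd (h : T2 -> \bar R) :
  measurable_fun setT h -> (forall y, 0 <= h y)%E ->
  (\int[P1 \x P2]_w h w.2 = \int[P2]_y h y)%E.
Proof.
move=> mh h0; rewrite fubini_tonelli1 //=; last exact: measurableT_comp.
by rewrite /fubini_F /= integral_cst //= probability_setT mule1.
Qed.

Lemma integrable_prod_fst (h : T1 -> \bar R) :
  P1.-integrable setT h -> (P1 \x P2)%E.-integrable setT (fun w => h w.1).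
Proof.
move=> /integrableP[mh hfin]; apply/integrableP; split.
  exact: measurableT_comp.
by rewrite (integral_prod_fst (h := fun x => `|h x|%E)) //; exact: measurableT_comp.
Qed.

Lemma integrable_prod_snd (h : T2 -> \bar R) :
  P2.-integrable setT h -> (P1 \x P2)%E.-integrable setT (fun w => h w.2).
Proof.
move=> /integrableP[mh hfin]; apply/integrableP; split.
  exact: measurableT_comp.
by rewrite (integral_prod_snd (h := fun y => `|h y|%E)) //; exact: measurableT_comp.
Qed.

Lemma integrable_prod_mul (a : T1 -> R) (b : T2 -> R) :
  measurable_fun setT a -> [bounded a x | x in setT] ->
  P2.-integrable setT (EFin \o b) ->
  (P1 \x P2)%E.-integrable setT (fun w => (a w.1 * b w.2)%:E).
Proof.
move=> ma [M [Mreal Ma]] ib.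
apply: (@integrableMr _ _ _ _ _ measurableT (a \o fst) (fun w => (b w.2)%:E)).
- exact: measurableT_comp.
- by exists M; split => // N MN w _; exact: Ma.
- exact: (integrable_prod_snd (h := EFin \o b)).
Qed.

Lemma integral_prod_mul (a : T1 -> R) (b : T2 -> R) :
  measurable_fun setT a -> [bounded a x | x in setT] ->
  P2.-integrable setT (EFin \o b) ->
  (\int[P1 \x P2]_w (a w.1 * b w.2)%:E =
     \int[P1]_x (a x)%:E * \int[P2]_y (b y)%:E)%E.
Proof.
move=> ma abnd ib.
rewrite -(integral12_prod_meas1 (integrable_prod_mul ma abnd ib)) /fubini_F /=.
rewrite -(fineK (integrable_fin_num measurableT ib)) -integralZr //.
apply: eq_integral => x _ /=; rewrite fineK ?(integrable_fin_num measurableT ib) //.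
  by under eq_integral do rewrite EFinM; rewrite integralZl.
apply: measurable_bounded_integrable => //.
exact: (le_lt_trans (probability_le1 _ _) (ltry _)).
Qed.

End product_probability.

Lemma normr_le1D_expR_sq (R : realType) (k e : R) : 0 < k ->
  `|e| <= 1 + k^-1 * expR (k * e ^+ 2).
Proof.
move=> k0; have : `|e| <= 1 + e ^+ 2.
  by rewrite -real_normK ?num_real //; have := normr_ge0 e; nra.
move/le_trans; apply; rewrite lerD2l ler_pdivlMl //.
by apply: le_trans (expR_ge1Dx _); rewrite lerDr ltW.
Qed.

Lemma integrable_of_expR_sq (R : realType) (P : probability R R) (k : R) :
  0 < k -> (\int[P]_e (expR (k * e ^+ 2))%:E < +oo)%E ->
  P.-integrable setT EFin.
Proof.
move=> k0 hk.
have mexp : measurable_fun setT (fun e : R => (expR (k * e ^+ 2))%:E).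
  apply/measurable_EFinP; apply: measurableT_comp => //.
  by apply: measurable_funM => //; exact: measurable_funX.
have iexp : P.-integrable setT (fun e => (expR (k * e ^+ 2))%:E).
  apply/integrableP; split => //.
  by under eq_integral do rewrite gee0_abs ?lee_fin ?expR_ge0 //.
apply: (le_integrable measurableT _ _ (integrableD measurableT
  (finite_measure_integrable_cst P 1 measurableT) (integrableZl measurableT k^-1 iexp))).
  exact/measurable_EFinP.
move=> e _ /=; rewrite lee_fin.
rewrite [X in _ <= X]ger0_norm; first exact: normr_le1D_expR_sq.
by rewrite addr_ge0 ?mulr_ge0 ?invr_ge0 ?expR_ge0 ?ltW.
Qed.

Lemma drift_affine_bound (R : realType) (mu : R -> R) :
  (forall M : R, exists C : R, forall x, `|x| <= M -> `|mu x| <= C) ->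
  (exists r : R, r < 1 /\ exists M : R, forall x, M <= `|x| ->
      `|x + mu x| / `|x| <= r) ->
  exists r K : R, [/\ 0 <= r, r < 1, 0 <= K &
     forall y, `|y + mu y| <= r * `|y| + K].
Proof.
move=> mu_loc [r [r1 [M hM]]].
pose M1 := Num.max M 1.
have M1_ge1 : 1 <= M1 by rewrite le_max lexx orbT.
have M_le : M <= M1 by rewrite le_max lexx.
have [C hC] := mu_loc M1.
have C0 : 0 <= C.
  by apply: le_trans (hC 0 _) => //; rewrite normr0 (le_trans ler01).
have r0 : 0 <= r.
  have := hM M1; rewrite ger0_norm; last exact: le_trans ler01 M1_ge1.
  move=> /(_ M_le); apply: le_trans.
  by rewrite divr_ge0 // ltW // (lt_le_trans ltr01).
exists r, (M1 + C); split => //; first by rewrite addr_ge0 // (le_trans ler01).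
move=> y; have [y_small|y_large] := ltP `|y| M1.
  have := hC y (ltW y_small); have := ler_normD y (mu y); have := normr_ge0 y.
  nra.
have y0 : 0 < `|y| by apply: lt_le_trans y_large; apply: lt_le_trans M1_ge1.
have := hM y (le_trans M_le y_large); rewrite ler_pdivrMr //; nra.
Qed.

Definition norm_cut (R : realType) (n : nat) (y : R) : R :=
  if `|y| <= n%:R then `|y| else 0.

Lemma norm_cut_ge0 (R : realType) n (y : R) : 0 <= norm_cut n y.
Proof. by rewrite /norm_cut; case: ifP. Qed.

Lemma measurable_norm_cut (R : realType) n : measurable_fun setT (@norm_cut R n).
Proof.
apply: measurable_fun_ifT; last exact: measurable_cst.
  by apply: measurable_fun_ler; [exact: normr_measurable | exact: measurable_cst].
exact: normr_measurable.
Qed.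

(* One step of the truncated Lyapunov function [min(|.|, N)] from [y] to [u];
   [K] absorbs the noise. *)
Lemma truncated_drift_step (R : realType) (y u N r K : R) :
  0 <= r -> r < 1 -> 0 <= K -> 0 <= N -> `|u| <= r * `|y| + K ->
  Num.min `|u| N + (1 - r) * (if `|y| <= N then `|y| else 0) <=
    Num.min `|y| N + K.
Proof.
move=> r0 r1 K0 N0 hu.
have hm1 : Num.min `|u| N <= `|u| by rewrite ge_min lexx.
have hm2 : Num.min `|u| N <= N by rewrite ge_min lexx orbT.
have y0 := normr_ge0 y; case: ifPn => hy.
  by rewrite (min_idPl hy); lra.
have -> : Num.min `|y| N = N by apply/min_idPr; rewrite ltW // ltNge.
lra.
Qed.

Section nonneg_integral_bounds.
Context d (T : measurableType d) (R : realType) (m : measure T R).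

Lemma ge0_integral_le_cancel (f g h k : T -> \bar R) :
  measurable_fun setT f -> measurable_fun setT g ->
  measurable_fun setT h -> measurable_fun setT k ->
  (forall x, 0 <= f x)%E -> (forall x, 0 <= g x)%E ->
  (forall x, 0 <= h x)%E -> (forall x, 0 <= k x)%E ->
  (forall x, f x + g x <= h x + k x)%E ->
  (\int[m]_x f x = \int[m]_x h x)%E -> (\int[m]_x h x)%E \is a fin_num ->
  (\int[m]_x g x <= \int[m]_x k x)%E.
Proof.
move=> mf mg mh mk f0 g0 h0 k0 fghk fh hfin.
have := ge0_le_integral m measurableT (fun x _ => adde_ge0 (f0 x) (g0 x))
  (emeasurable_funD mf mg) (emeasurable_funD mh mk) (fun x _ => fghk x).
rewrite !ge0_integralD //; try by move=> x _.
by rewrite fh leeD2lE.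
Qed.

Lemma integral_norm_le_of_norm_cut (u : T -> R) (B : \bar R) :
  measurable_fun setT u ->
  (forall n, \int[m]_x (norm_cut n (u x))%:E <= B)%E ->
  (\int[m]_x `|u x|%:E <= B)%E.
Proof.
move=> mu_ cutB.
have mcut n : measurable_fun setT (fun x => (norm_cut n (u x))%:E).
  by apply/measurable_EFinP; apply: measurableT_comp => //; exact: measurable_norm_cut.
have cut0 n x : setT x -> (0 <= (norm_cut n (u x))%:E)%E.
  by move=> _; rewrite lee_fin norm_cut_ge0.
have cut_nd x : setT x -> nondecreasing_seq (fun n => (norm_cut n (u x))%:E).
  move=> _ i j ij; rewrite lee_fin /norm_cut.
  case: ifPn => [hi|_]; last by case: ifP.
  by rewrite ifT // (le_trans hi) // ler_nat.
have cut_lim x : limn (fun n => (norm_cut n (u x))%:E) = `|u x|%:E.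
  apply: cvg_lim => //; apply: cvg_near_cst.
  near=> n; rewrite /norm_cut ifT //; near: n; exact: nbhs_infty_ger.
have mcvg := @cvg_monotone_convergence _ _ _ m setT measurableT _ mcut cut0 cut_nd.
under eq_integral do rewrite -cut_lim.
rewrite -(cvg_lim _ mcvg) //.
by apply: lime_le; [exact: cvgP mcvg | exact: nearW].
Unshelve. all: by end_near.
Qed.

End nonneg_integral_bounds.

Section piplus.
Context (R : realType) (mu : R -> R).

Lemma normr_piplusM x a : `|piplus mu x * a| <= `|a|.
Proof. by rewrite /piplus; case: ifP; rewrite ?mul1r ?mul0r ?normr0. Qed.

Lemma piplusM_ge0 x : 0 <= piplus mu x * mu x.
Proof. by rewrite /piplus; case: ifP => [/ltW|]; rewrite ?mul1r ?mul0r. Qed.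

Lemma piplusM_gt0 x : (0 < piplus mu x * mu x) = (0 < mu x).
Proof.
by rewrite /piplus; have [mu_gt0|_] := ltP 0 (mu x); rewrite ?mul1r // mul0r ltxx.
Qed.

Lemma measurable_piplus : measurable_fun setT mu -> measurable_fun setT (piplus mu).
Proof.
move=> mmu; apply: measurable_fun_ifT => //.
by apply: measurable_fun_ltr => //; exact: measurable_cst.
Qed.

Lemma fplusE z : fplus mu z = piplus mu z.1 * (z.2 - z.1).
Proof.
rewrite /fplus /piplus; case: ifP => _.
  by rewrite subrr add0r !mul1r expRK.
by rewrite subr0 !mul0r addr0 ln1.
Qed.

Lemma measurable_fplus : measurable_fun setT mu -> measurable_fun setT (fplus mu).
Proof.
move=> mmu; rewrite (funext fplusE); apply: measurable_funM.
  exact: measurableT_comp (measurable_piplus mmu) measurable_fst.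
by apply: measurable_funB; [exact: measurable_snd | exact: measurable_fst].
Qed.

End piplus.

Lemma measurable_set_gt0 (R : realType) (q : R -> R) :
  measurable_fun setT q -> measurable [set x : R | 0 < q x].
Proof.
move=> mq; rewrite -[X in measurable X]setTI.
have -> : [set x : R | 0 < q x] = q @^-1` `]0, +oo[.
  by apply/seteqP; split => x /=; rewrite in_itv /= andbT.
by apply: mq => //; exact: measurable_itv.
Qed.

Lemma integral_snd_gt0 (R : realType) (nu : measure (R * R)%type R) (q : R -> R) :
  measurable_fun setT q -> (forall x, 0 <= q x) ->
  (0 < lebesgue_measure [set x : R | (0 < q x)%R])%E ->
  (forall A, measurable A -> nu A = 0 ->
     (lebesgue_measure \x lebesgue_measure)%E A = 0) ->
  (0 < \int[nu]_z (q z.2)%:E)%E.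
Proof.
move=> mq q0 q_pos nu_ac.
have mqsnd : measurable_fun setT (fun z : R * R => (q z.2)%:E).
  by apply/measurable_EFinP; exact: measurableT_comp mq measurable_snd.
rewrite lt_def integral_ge0 ?andbT //; last by move=> z _; rewrite lee_fin.
apply/eqP => int0.
have /(ae_eq_integral_abs nu measurableT mqsnd).1 : (\int[nu]_z `|(q z.2)%:E| = 0)%E.
  by rewrite -int0; apply: eq_integral => z _; rewrite abse_EFin ger0_norm.
move=> [N [mN N0 qN]].
pose A := (setT : set R) `*` [set x : R | 0 < q x].
have mA : measurable A by apply: measurableX => //; exact: measurable_set_gt0.
have /(nu_ac _ mA) : nu A = 0.
  apply: subset_measure0 mA mN _ N0 => -[x y] [_ /= qy]; apply: qN => /= /(_ I) /eqP.
  by rewrite eqe gt_eqF.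
rewrite product_measure1E //; last exact: measurable_set_gt0.
have lebT : lebesgue_measure (setT : set R) = +oo%E.
  by rewrite -set_itvNyy lebesgue_measure_itv.
move=> leb0; have : (+oo * lebesgue_measure [set x : R | (0 < q x)%R] = 0)%E.
  by rewrite -leb0; congr (_ * _)%E; exact: esym lebT.
by rewrite gt0_mulye.
Qed.

Section Phi_chain.
Context (R : realType) (mu sigma : R -> R) (Pe : probability R R)
  (nu : probability (R * R)%type R) (r K Cs : R).
Hypotheses (mmu : measurable_fun setT mu) (msigma : measurable_fun setT sigma)
  (nu_inv : Phi_invariant mu sigma Pe nu)
  (sigma_gt0 : forall x, 0 < sigma x) (sigma_le : forall x, sigma x <= Cs)
  (r_ge0 : 0 <= r) (r_lt1 : r < 1) (K_ge0 : 0 <= K)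
  (drift : forall y, `|y + mu y| <= r * `|y| + K)
  (Pe_int : Pe.-integrable setT EFin) (Pe_mean : (\int[Pe]_e e%:E = 0)%E).

Definition Phi_map (w : (R * R) * R) : R * R := Phi_step mu sigma w.1 w.2.

Lemma measurable_Phi_map : measurable_fun setT Phi_map.
Proof.
have my : measurable_fun setT (fun w : (R * R) * R => w.1.2).
  exact: measurableT_comp.
apply/measurable_fun_pairP; split => //=.
apply: measurable_funD; first by apply: measurable_funD => //; exact: measurableT_comp.
by apply: measurable_funM; [exact: measurableT_comp | exact: measurable_snd].
Qed.

Lemma Phi_invariant_pushforward A : measurable A ->
  nu A = pushforward (nu \x Pe)%E Phi_map A.
Proof.
move=> mA; rewrite nu_inv // /pushforward /product_measure1 /=.
apply: eq_integral => z _; rewrite /Phi_kernel; congr (Pe _).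
by apply/seteqP; split => e /=; rewrite /xsection /= inE.
Qed.

Lemma integral_Phi_invariant_pushforward (F : R * R -> \bar R) :
  (\int[nu]_z F z = \int[pushforward (nu \x Pe)%E Phi_map]_z F z)%E.
Proof.
have mPhi := measurable_Phi_map.
by apply: eq_measure_integral => A mA _ /=; exact: Phi_invariant_pushforward.
Qed.

Lemma ge0_integral_Phi_invariant (F : R * R -> \bar R) :
  measurable_fun setT F -> (forall z, 0 <= F z)%E ->
  (\int[nu]_z F z = \int[nu \x Pe]_w F (Phi_map w))%E.
Proof.
move=> mF F0; rewrite integral_Phi_invariant_pushforward.
by rewrite ge0_integral_pushforward //; exact: measurable_Phi_map.
Qed.

Lemma integral_Phi_invariant (F : R * R -> \bar R) :
  measurable_fun setT F ->
  (nu \x Pe)%E.-integrable setT (fun w => F (Phi_map w)) ->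
  (\int[nu]_z F z = \int[nu \x Pe]_w F (Phi_map w))%E.
Proof.
move=> mF iF; rewrite integral_Phi_invariant_pushforward.
by rewrite integral_pushforward // ?preimage_setT //; exact: measurable_Phi_map.
Qed.

Lemma integrable_Phi_invariant (F : R * R -> \bar R) :
  measurable_fun setT F ->
  (nu \x Pe)%E.-integrable setT (fun w => F (Phi_map w)) ->
  nu.-integrable setT F.
Proof.
move=> mF /integrableP[_ iF]; apply/integrableP; split => //.
by rewrite (ge0_integral_Phi_invariant (F := fun z => `|F z|)%E) //; exact: measurableT_comp.
Qed.

Lemma fplus_Phi_map (w : (R * R) * R) :
  fplus mu (Phi_map w) =
    piplus mu w.1.2 * mu w.1.2 + piplus mu w.1.2 * sigma w.1.2 * w.2.
Proof. by rewrite fplusE /Phi_map /Phi_step /= -mulrA -mulrDr; congr (_ * _); ring. Qed.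

Let Cs_ge0 : 0 <= Cs. Proof. exact: le_trans (ltW (sigma_gt0 0)) (sigma_le 0). Qed.

Let measurable_min_norm (n : nat) :
  measurable_fun setT (fun y : R => Num.min `|y| n%:R).
Proof. by apply: measurable_minr; [exact: normr_measurable | exact: measurable_cst]. Qed.

Let min_norm_ge0 (n : nat) (y : R) : (0 <= (Num.min `|y| n%:R)%:E)%E.
Proof. by rewrite lee_fin le_min normr_ge0 ler0n. Qed.

Lemma Phi_min_norm_step n (w : (R * R) * R) :
  ((Num.min `|(Phi_map w).2| n%:R)%:E + (1 - r)%:E * (norm_cut n w.1.2)%:E <=
     (Num.min `|w.1.2| n%:R)%:E + (K%:E + Cs%:E * `|w.2|%:E))%E.
Proof.
case: w => [[x y] e]; rewrite -!EFinM -!EFinD lee_fin /norm_cut /=.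
apply: truncated_drift_step => //; first by rewrite addr_ge0 ?mulr_ge0.
apply: (le_trans (ler_normD _ _)); rewrite normrM (gtr0_norm (sigma_gt0 y)).
have := drift y; have := sigma_le y; have := normr_ge0 e; have := ltW (sigma_gt0 y).
nra.
Qed.

Lemma integral_min_norm_Phi n :
  (\int[nu \x Pe]_w (Num.min `|(Phi_map w).2| n%:R)%:E =
     \int[nu \x Pe]_w (Num.min `|w.1.2| n%:R)%:E)%E.
Proof.
have mmin : measurable_fun setT (fun z : R * R => (Num.min `|z.2| n%:R)%:E).
  by apply/measurable_EFinP; exact: measurableT_comp (measurable_min_norm n) measurable_snd.
rewrite (integral_prod_fst nu Pe (h := fun z => (Num.min `|z.2| n%:R)%:E)) //.
by rewrite (ge0_integral_Phi_invariant (F := fun z => (Num.min `|z.2| n%:R)%:E)).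
Qed.

Let measurable_norm : measurable_fun setT (fun e : R => `|e|%:E).
Proof. by apply/measurable_EFinP; exact: normr_measurable. Qed.

Let integral_min_norm_fin_num n :
  (\int[nu \x Pe]_w (Num.min `|w.1.2| n%:R)%:E)%E \is a fin_num.
Proof.
rewrite ge0_fin_numE ?integral_ge0 //.
apply: (@le_lt_trans _ _ (\int[nu \x Pe]_w (cst (n%:R : R)%:E) w)%E).
  apply: ge0_le_integral => //; last by move=> w _; rewrite lee_fin ge_min lexx orbT.
  apply/measurable_EFinP; apply: (measurableT_comp (measurable_min_norm n)).
  exact: measurableT_comp.
by rewrite integral_cst //= probability_setT mule1 ltry.
Qed.

Let integral_noise_bound :
  (\int[nu \x Pe]_w (K%:E + Cs%:E * `|w.2|%:E) =
     K%:E + Cs%:E * \int[Pe]_e `|e|%:E)%E.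
Proof.
rewrite ge0_integralD //; last 2 first.
- by move=> w _; rewrite mule_ge0 ?lee_fin.
- apply: emeasurable_funM => //; exact: measurableT_comp measurable_norm measurable_snd.
rewrite integral_cst //= probability_setT mule1 ge0_integralZl_EFin //.
- by rewrite (integral_prod_snd nu Pe (h := fun e => `|e|%:E)).
- exact: measurableT_comp measurable_norm measurable_snd.
Qed.

Lemma Phi_norm_cut_bound n :
  ((1 - r)%:E * \int[nu]_z (norm_cut n z.2)%:E <=
     K%:E + Cs%:E * \int[Pe]_e `|e|%:E)%E.
Proof.
have mcut : measurable_fun setT (fun z : R * R => (norm_cut n z.2)%:E).
  by apply/measurable_EFinP; apply: measurableT_comp => //; exact: measurable_norm_cut.
have int_cut : (\int[nu \x Pe]_w ((1 - r)%:E * (norm_cut n w.1.2)%:E) =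
    (1 - r)%:E * \int[nu]_z (norm_cut n z.2)%:E)%E.
  rewrite ge0_integralZl_EFin ?subr_ge0 ?ltW //; last first.
  - exact: measurableT_comp mcut measurable_fst.
  - by move=> w _; rewrite lee_fin norm_cut_ge0.
  by rewrite (integral_prod_fst nu Pe (h := fun z => (norm_cut n z.2)%:E)) // => z;
    rewrite lee_fin norm_cut_ge0.
rewrite -int_cut -integral_noise_bound.
apply: ge0_integral_le_cancel (Phi_min_norm_step n) _ _.
- apply/measurable_EFinP; apply: (measurableT_comp (measurable_min_norm n)).
  exact: measurableT_comp measurable_snd measurable_Phi_map.
- apply: emeasurable_funM => //; exact: measurableT_comp mcut measurable_fst.
- apply/measurable_EFinP; apply: (measurableT_comp (measurable_min_norm n)).
  exact: measurableT_comp.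
- apply: emeasurable_funD => //.
  apply: emeasurable_funM => //; exact: measurableT_comp measurable_norm measurable_snd.
- by move=> w; exact: min_norm_ge0.
- by move=> w; rewrite mule_ge0 ?lee_fin ?norm_cut_ge0 ?subr_ge0 ?ltW.
- by move=> w; exact: min_norm_ge0.
- by move=> w; rewrite adde_ge0 ?mule_ge0 ?lee_fin.
- exact: integral_min_norm_Phi.
- exact: integral_min_norm_fin_num.
Qed.

Lemma integrable_norm_snd : nu.-integrable setT (fun z => `|z.2|%:E).
Proof.
have Pe_norm_lty : (\int[Pe]_e `|e|%:E < +oo)%E.
  by move/integrableP: Pe_int => [_]; under eq_integral do rewrite abse_EFin.
have r1 : 0 < 1 - r by rewrite subr_gt0.
apply/integrableP; split.
  by apply/measurable_EFinP; apply: measurableT_comp => //; exact: normr_measurable.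
under eq_integral do rewrite abse_EFin normr_id.
apply: (@le_lt_trans _ _
    (((1 - r)^-1)%:E * (K%:E + Cs%:E * \int[Pe]_e `|e|%:E))%E).
  apply: (integral_norm_le_of_norm_cut (u := snd)) => // n.
  by rewrite lee_pdivlMl //; exact: Phi_norm_cut_bound.
rewrite lte_mul_pinfty ?lee_fin ?invr_ge0 ?ltW // lte_add_pinfty ?ltry //.
by rewrite lte_mul_pinfty ?lee_fin.
Qed.

Let mdrift : measurable_fun setT (fun y => piplus mu y * mu y).
Proof. exact: measurable_funM (measurable_piplus mmu) mmu. Qed.

Let mnoise : measurable_fun setT (fun y => piplus mu y * sigma y).
Proof. exact: measurable_funM (measurable_piplus mmu) msigma. Qed.

Lemma integrable_drift_term :
  nu.-integrable setT (fun z => (piplus mu z.2 * mu z.2)%:E).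
Proof.
apply: (le_integrable measurableT _ _ (integrableD measurableT
  (integrableZl measurableT (r + 1) integrable_norm_snd)
  (finite_measure_integrable_cst nu K measurableT))).
  by apply/measurable_EFinP; exact: measurableT_comp mdrift measurable_snd.
move=> [x y] _ /=; rewrite lee_fin.
apply: le_trans (normr_piplusM _ _ _) _.
rewrite [X in _ <= X]ger0_norm; last by rewrite addr_ge0 ?mulr_ge0 ?addr_ge0.
have := ler_normB (y + mu y) y; rewrite addrAC subrr add0r.
by have := drift y; have := normr_ge0 y; nra.
Qed.

Let noise_bounded :
  [bounded piplus mu z.2 * sigma z.2 | z in (setT : set (R * R))].
Proof.
exists Cs; split; first exact: num_real.
move=> C CsC [x y] _ /=; apply: le_trans (ltW CsC).
by apply: le_trans (normr_piplusM _ _ _) _; rewrite gtr0_norm.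
Qed.

Lemma integrable_noise_term : (nu \x Pe)%E.-integrable setT
  (fun w => (piplus mu w.1.2 * sigma w.1.2 * w.2)%:E).
Proof.
apply: (integrable_prod_mul nu (a := fun z => piplus mu z.2 * sigma z.2) (b := id)) => //.
exact: measurableT_comp mnoise measurable_snd.
Qed.

Lemma integral_noise_term :
  (\int[nu \x Pe]_w (piplus mu w.1.2 * sigma w.1.2 * w.2)%:E = 0)%E.
Proof.
rewrite (integral_prod_mul nu (a := fun z => piplus mu z.2 * sigma z.2) (b := id)) //=.
  by rewrite Pe_mean mule0.
exact: measurableT_comp mnoise measurable_snd.
Qed.

Lemma integrable_fplus_Phi_map :
  (nu \x Pe)%E.-integrable setT (fun w => (fplus mu (Phi_map w))%:E).
Proof.
under eq_fun do rewrite fplus_Phi_map EFinD.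
apply: integrableD => //; last exact: integrable_noise_term.
exact: (integrable_prod_fst Pe integrable_drift_term).
Qed.

Lemma integrable_fplus : nu.-integrable setT (fun z => (fplus mu z)%:E).
Proof.
apply: (integrable_Phi_invariant _ integrable_fplus_Phi_map).
by apply/measurable_EFinP; exact: measurable_fplus.
Qed.

Lemma integral_fplus :
  (\int[nu]_z (fplus mu z)%:E = \int[nu]_z (piplus mu z.2 * mu z.2)%:E)%E.
Proof.
have mf : measurable_fun setT (fun z => (fplus mu z)%:E).
  by apply/measurable_EFinP; exact: measurable_fplus.
rewrite (integral_Phi_invariant mf integrable_fplus_Phi_map).
under eq_integral do rewrite fplus_Phi_map EFinD.
rewrite integralD //; first last.
- exact: integrable_noise_term.
- exact: (integrable_prod_fst Pe integrable_drift_term).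
rewrite integral_noise_term adde0.
rewrite (integral_prod_fst nu Pe (h := fun z => (piplus mu z.2 * mu z.2)%:E)) //.
- by apply/measurable_EFinP; exact: measurableT_comp mdrift measurable_snd.
- by move=> z; rewrite lee_fin piplusM_ge0.
Qed.

End Phi_chain.

Unset Implicit Arguments.

Theorem lemmal2p14 (R : realType) (mu sigma : R -> R)
  (Pe : probability R R) (nu : probability (R * R)%type R) :
  measurable_fun setT mu -> measurable_fun setT sigma ->
  (exists g : R -> R,
      measurable_fun setT g /\ (forall x, 0 <= g x) /\
      (forall A : set R, measurable A ->
         Pe A = (\int[lebesgue_measure]_(x in A) (g x)%:E)%E) /\
      (forall M : R, exists c C : R, 0 < c /\
         forall x, `|x| <= M -> c <= g x /\ g x <= C)) ->
  (forall M : R, exists C : R, forall x, `|x| <= M -> `|mu x| <= C) ->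
  (forall x, 0 < sigma x) ->
  (forall M : R, exists c : R, 0 < c /\ forall x, `|x| <= M -> c <= sigma x) ->
  (exists C : R, forall x, sigma x <= C) ->
  (exists r : R, r < 1 /\ exists M : R, forall x, M <= `|x| ->
      `|x + mu x| / `|x| <= r) ->
  (exists kappa : R, 0 < kappa /\
      (\int[Pe]_e (expR (kappa * e ^+ 2))%:E < +oo)%E) ->
  (\int[Pe]_e e%:E = 0)%E ->
  (0 < lebesgue_measure [set x : R | (0 < mu x)%R])%E ->
  Phi_invariant mu sigma Pe nu ->
  (forall A : set (R * R), measurable A ->
     (nu A = 0)%E <-> ((lebesgue_measure \x lebesgue_measure)%E A = 0)%E) ->
  nu.-integrable setT (fun z => (fplus mu z)%:E) /\
  (0 < \int[nu]_z (fplus mu z)%:E)%E.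
Proof.
(* (A1) and the lower bound on [sigma] are only needed for the existence of
   [nu] and its equivalence with [lambda_2], which are assumed here. *)
move=> mmu msigma _ mu_loc sigma_gt0 _ [Cs sigma_le] mu_contr [k [k0 Pe_gauss]]
  Pe_mean leb_pos nu_inv nu_equiv.
have Pe_int := integrable_of_expR_sq k0 Pe_gauss.
have [r [K [r_ge0 r_lt1 K_ge0 drift]]] := drift_affine_bound mu_loc mu_contr.
split; first exact: (integrable_fplus mmu msigma nu_inv sigma_gt0 sigma_le
  r_ge0 r_lt1 K_ge0 drift Pe_int).
rewrite (integral_fplus mmu msigma nu_inv sigma_gt0 sigma_le r_ge0 r_lt1 K_ge0
  drift Pe_int Pe_mean).
apply: (integral_snd_gt0 (q := fun y => piplus mu y * mu y)) => //.
- exact: measurable_funM (measurable_piplus mmu) mmu.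
- exact: piplusM_ge0.
- by under eq_set do rewrite piplusM_gt0.
- by move=> A mA /(nu_equiv A mA).
Qed.
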